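(* Let $n\in\{2,3\}$ and let $A=(a_{i,j})\in M_n(\mathcal F)$ be a supertropically nonsingular matrix whose characteristic polynomial $f_A(x)=\det(xI+A)$ has all coefficients tangible and which has $n$ distinct eigenvalues $\lambda_1,\dots,\lambda_n$. For each $k$, let $\lambda_k$ be the corner root of $f_A$ between two subsequent essential monomials $\alpha_{i_{k-1}}x^{n-i_{k-1}}$ and $\alpha_{i_k}x^{n-i_k}$, choose $t_k\in I_{\lambda_k}=\mathrm{Ind}_{i_k}\setminus \mathrm{Ind}_{i_{k-1}}$, and let $v_k$ be the tangible value of the $t_k$-th column of $\mathrm{adj}(A+\lambda_k I)$ (an eigenvector of $A$ for $\lambda_k$). Then $v_1,\dots,v_n$ are supertropically independent.
   Context: $\mathcal F=\mathcal T\cup\mathcal G\cup\{0_{\mathcal F}\}$ is the standard supertropical semifield: $\mathcal T$ is an ordered abelian group (e.g. $(\mathbb R,+)$, written multiplicatively), $\mathcal G=\{a^\nu: a\in\mathcal T\}$ is a copy of it (ghost elements), $\nu:\mathcal F\to\mathcal G\cup\{0_{\mathcal F}\}$ is the identity on $\mathcal G$ and $a\mapsto a^\nu$ on $\mathcal T$, $0_{\mathcal F}=-\infty$. Addition: $a+b$ is the one of $a,b$ of larger $\nu$-value if the $\nu$-values differ, and $a+b=a^\nu$ if $a^\nu=b^\nu$; multiplication is the group operation on $\nu$-values, the product being tangible iff both factors are tangible. For $a\in\mathcal F$, its tangible value $\hat a\in\mathcal T\cup\{0_{\mathcal F}\}$ is the tangible element with $\hat a^\nu=a^\nu$ (applied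 entrywise to vectors). $\det(A)=\sum_{\sigma\in S_n}\prod_i a_{i,\sigma(i)}$; $A$ is supertropically nonsingular if $\det(A)\in\mathcal T$. $\mathrm{adj}(A)_{i,j}=\det$ of the minor of $A$ obtained by deleting row $j$ and column $i$. The characteristic polynomial is $f_A(x)=\det(xI+A)=\sum_{k=0}^n\alpha_kx^{n-k}$, where $\alpha_k$ is the sum of the determinants of all $k\times k$ principal submatrices; when $\alpha_k\in\mathcal T$, $\mathrm{Ind}_k\subseteq[n]$ denotes the index set (of size $k$) on which the unique dominant permutation giving $\alpha_k$ is attained ($\mathrm{Ind}_0=\emptyset$). A monomial is essential if it strictly dominates the polynomial at some point; corner roots are points where two subsequent essential tangible monomials are equal. Eigenvalues of $A$ are the tangible values of roots of $f_A$ (elements $r$ with $f_A(r)\in\mathcal G\cup\{0_{\mathcal F}\}$). Vectors $v_1,\dots,v_k\in\mathcal F^n$ are supertropically dependent if there are $a_1,\dots,a_k\in\mathcal T$ with every coordinate of $\sum a_iv_i$ in $\mathcal G\cup\{0_{\mathcal F}\}$, and independent otherwise. *)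

From HB Require Import structures.
From mathcomp Require Import all_boot all_order all_algebra all_fingroup.
Set Implicit Arguments. Unset Strict Implicit. Unset Printing Implicit Defensive.
Import Order.TTheory GRing.Theory Num.Theory.

(* The group T of the paper is written                                  *)
(* multiplicatively; here it is written additively (max-plus style):   *)
(* the paper's product a*b of tangibles is a + b, and a^m is a *+ m.    *)
Definition ordered_abelian_group (G : porderZmodType) : Prop :=
  (forall x y : G, (x <= y)%R || (y <= x)%R) /\
  (forall x y z : G, (x <= y)%R -> (x + z <= y + z)%R).

Section Supertropical.
Variable G : porderZmodType.
Local Open Scope ring_scope.

(* The standard supertropical semifield F = T u G u {0_F}. *)
Inductive stf : Type :=
| SZero : stf            (* 0_F = -oo *)
| STan : G -> stf
| SGh : G -> stf.

(* nu-value; None stands for 0_F *)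
Definition nuv (a : stf) : option G :=
  match a with SZero => None | STan x => Some x | SGh x => Some x end.

Definition tangible (a : stf) : bool := if a is STan _ then true else false.
Definition ghost0 (a : stf) : bool := ~~ tangible a.

Definition hat (a : stf) : stf :=
  match a with SZero => SZero | STan x => STan x | SGh x => STan x end.

Definition nu_lt (a b : stf) : bool :=
  match nuv a, nuv b with
  | None, Some _ => true
  | Some x, Some y => x < y
  | _, _ => false
  end.
Definition nu_eq (a b : stf) : bool := nuv a == nuv b.

Definition sadd (a b : stf) : stf :=
  match nuv a, nuv b with
  | None, _ => b
  | _, None => a
  | Some x, Some y => if x < y then b else if y < x then a else SGh x
  end.

Definition smul (a b : stf) : stf :=
  match a, b with
  | SZero, _ => SZero
  | _, SZero => SZero
  | STan x, STan y => STan (x + y)%R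
  | STan x, SGh y | SGh x, STan y | SGh x, SGh y => SGh (x + y)%R
  end.

Definition sone : stf := STan 0%R.

Fixpoint spow (a : stf) (m : nat) : stf :=
  match m with 0 => sone | m'.+1 => smul a (spow a m') end.

Variable n : nat.

Definition sdet m (A : 'M[stf]_m) : stf :=
  \big[sadd/SZero]_(s : 'S_m) \big[smul/sone]_(i < m) A i (s i).

(* the increasing enumeration of [n] \ {i} *)
Definition st_skip (i : 'I_n) (r : 'I_n.-1) : 'I_n := insubd i (bump i r).

Definition st_minor (A : 'M[stf]_n) (i j : 'I_n) : 'M[stf]_n.-1 :=
  \matrix_(r, c) A (st_skip i r) (st_skip j c).

(* adj(A)_{i,j} = det of the minor deleting row j and column i *)
Definition sadj (A : 'M[stf]_n) : 'M[stf]_n :=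
  \matrix_(i, j) sdet (st_minor A j i).

Definition st_addscal (A : 'M[stf]_n) (l : stf) : 'M[stf]_n :=
  \matrix_(i, j) if i == j then sadd (A i j) l else A i j.

(* term of the determinant of the principal submatrix on S, for the
   permutation s of S (s : 'S_n with support in S) *)
Definition st_pterm (A : 'M[stf]_n) (S : {set 'I_n}) (s : 'S_n) : stf :=
  \big[smul/sone]_(i in S) A i (s i).

Definition st_pdet (A : 'M[stf]_n) (S : {set 'I_n}) : stf :=
  \big[sadd/SZero]_(s : 'S_n | perm_on S s) st_pterm A S s.

Definition st_alpha (A : 'M[stf]_n) (k : nat) : stf :=
  \big[sadd/SZero]_(S : {set 'I_n} | #|S| == k) st_pdet A S.

Definition st_monom (A : 'M[stf]_n) (k : nat) (x : stf) : stf :=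
  smul (st_alpha A k) (spow x (n - k)).
Definition charpoly_eval (A : 'M[stf]_n) (x : stf) : stf :=
  \big[sadd/SZero]_(k < n.+1) st_monom A k x.

(* S is the index set of a dominant (i.e. nu-maximal) permutation for alpha_k;
   when alpha_k is tangible this dominant permutation is unique *)
Definition is_Ind (A : 'M[stf]_n) (k : nat) (S : {set 'I_n}) : bool :=
  (#|S| == k) && [exists s : 'S_n, perm_on S s && nu_eq (st_pterm A S s) (st_alpha A k)].

(* Ind_k (meaningful when alpha_k is tangible) *)
Definition st_Ind (A : 'M[stf]_n) (k : nat) : {set 'I_n} :=
  odflt set0 [pick S : {set 'I_n} | is_Ind A k S].

Definition st_essential (A : 'M[stf]_n) (k : nat) : Prop :=
  exists x : G, forall j, (j <= n)%N -> j != k ->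
    nu_lt (st_monom A j (STan x)) (st_monom A k (STan x)).

Definition st_eigenvalue (A : 'M[stf]_n) (l : G) : Prop :=
  ghost0 (charpoly_eval A (STan l)).

Definition st_dependent (m : nat) (v : nat -> 'cV[stf]_n) : Prop :=
  exists a : nat -> G, forall j : 'I_n,
    ghost0 (\big[sadd/SZero]_(1 <= k < m.+1) smul (STan (a k)) (v k j 0)).
Definition st_independent (m : nat) (v : nat -> 'cV[stf]_n) : Prop :=
  ~ st_dependent m v.

End Supertropical.

(* All
   monomials of [f_A] are essential, so [alpha_k = lam_1 + ... + lam_k] with
   [lam_1 > lam_2 > lam_3], and the dominant index sets are [Ind_k = {t_1, ..., t_k}];
   their dominance bounds every cycle of [x_pq = A (t_p) (t_q)] by a sum of [lam]'s.
   Let [V_pq] be the valuation of the [t_p]-th entry of [v_q], a 2 x 2 minor of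
   [A + lam_q I]. If [sum_k a_k v_k] were ghost, then in the row [t_l], where the
   term [a_l + V_ll] is tangible, some [k <> l] would satisfy
   [a_k + V_lk >= a_l + V_ll]; these rivals close a cycle, along which the [a]'s
   cancel, so some non-identity permutation of [V] would weigh at least as much as
   its diagonal. Expanding the minors, every monomial of such a cycle is a sum of
   cycles of [x] plus [lam]'s, and the cycle bounds show that the identity is
   strictly dominant. *)

From HB Require Import structures.
From mathcomp Require Import all_boot all_order all_algebra all_fingroup.
From mathcomp Require Import zify.
Import Order.TTheory GRing.Theory Num.Theory.

Set Implicit Arguments. Unset Strict Implicit. Unset Printing Implicit Defensive.
Local Open Scope ring_scope.

(** * Linear arithmetic in an ordered abelian group *)

Section OrderedAbelianGroup.
Variable G : porderZmodType.
Hypothesis hG : ordered_abelian_group G.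

Lemma oag_lerD2r (x y z : G) : (x + z <= y + z) = (x <= y).
Proof.
apply/idP/idP => [/(hG.2 _ _ (- z))|]; last exact: hG.2.
by rewrite !addrK.
Qed.

Lemma oag_ltrD2r (x y z : G) : (x + z < y + z) = (x < y).
Proof. by rewrite !lt_def oag_lerD2r (inj_eq (addIr z)). Qed.

Lemma oag_ltrD2l (x y z : G) : (z + x < z + y) = (x < y).
Proof. by rewrite ![z + _]addrC oag_ltrD2r. Qed.

Lemma oag_ltNge (x y : G) : (x < y) = ~~ (y <= x).
Proof.
case/orP: (hG.1 x y) => [xy|yx]; last by rewrite lt_leAnge yx andbF.
by rewrite lt_leAnge xy.
Qed.

Lemma oag_lerD (x y z w : G) : x <= y -> z <= w -> x + z <= y + w.
Proof.
move=> xy zw; apply: le_trans (_ : y + z <= _); first by rewrite oag_lerD2r.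
by rewrite ![y + _]addrC oag_lerD2r.
Qed.

Lemma oag_ltr_leD (x y z w : G) : x < y -> z <= w -> x + z < y + w.
Proof.
move=> xy zw; apply: lt_le_trans (_ : y + z <= _); first by rewrite oag_ltrD2r.
by rewrite ![y + _]addrC oag_lerD2r.
Qed.

Lemma oag_subr_gt0 (x y : G) : (0 < y - x) = (x < y).
Proof. by rewrite -(oag_ltrD2r 0 _ x) add0r subrK. Qed.

Lemma oag_subr_ge0 (x y : G) : (0 <= y - x) = (x <= y).
Proof. by rewrite -(oag_lerD2r 0 _ x) add0r subrK. Qed.

End OrderedAbelianGroup.

(* A goal [h1 -> ... -> hk -> g] between linear (in)equalities is closed by
   finding a multiset of the [hi] whose gaps (right minus left side) add up
   exactly to the gap of [g]; gaps are normalised to integer coefficient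
   vectors over the atoms, so the search runs by computation. *)
Module LinearArith.

Inductive term := Atom of nat | Zero | Add of term & term | Opp of term
  | Muln of term & nat | Mulz of term & int.

Record ineq := Ineq { lhs : term; rhs : term; strict : bool }.

Fixpoint addv (c1 c2 : seq int) : seq int :=
  match c1, c2 with
  | k1 :: c1', k2 :: c2' => (k1 + k2) :: addv c1' c2'
  | [::], c | c, [::] => c
  end.

Definition scalev (k : int) (c : seq int) := map ( *%R^~ k) c.

Fixpoint coef (t : term) : seq int :=
  match t with
  | Atom i => rcons (nseq i 0) 1
  | Zero => [::]
  | Add a b => addv (coef a) (coef b)
  | Opp a => scalev (-1) (coef a)
  | Muln a k => scalev k%:Z (coef a)
  | Mulz a k => scalev k (coef a)
  end.

Definition gap (h : ineq) : seq int * bool :=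
  (addv (coef (rhs h)) (scalev (-1) (coef (lhs h))), strict h).

Definition closes (g c : seq int * bool) : bool :=
  all (eq_op^~ 0) (addv g.1 (scalev (-1) c.1)) && (g.2 ==> c.2).

(* [search hs k c g]: some multiset of at most [k] gaps from [hs], added to
   [c], closes [g]. *)
Fixpoint search (hs : seq (seq int * bool)) : nat -> seq int * bool ->
    seq int * bool -> bool :=
  match hs with
  | [::] => fun _ c g => closes g c
  | h :: hs' => fix loop k c g :=
      search hs' k c g ||
      if k is k'.+1 then loop k' (addv c.1 h.1, c.2 || h.2) g else false
  end.

Section Soundness.
Variable G : porderZmodType.
Hypothesis hG : ordered_abelian_group G.
Variable e : seq G.

Fixpoint eval (t : term) : G :=
  match t with
  | Atom i => nth 0 e i
  | Zero => 0
  | Add a b => eval a + eval b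
  | Opp a => - eval a
  | Muln a k => eval a *+ k
  | Mulz a k => eval a *~ k
  end.

Fixpoint evalv (e' : seq G) (c : seq int) : G :=
  match e', c with
  | x :: e'', k :: c' => x *~ k + evalv e'' c'
  | _, _ => 0
  end.

Lemma evalv_nil e' : evalv e' [::] = 0. Proof. by case: e'. Qed.

Lemma evalv_addv e' c1 c2 : evalv e' (addv c1 c2) = evalv e' c1 + evalv e' c2.
Proof.
elim: e' c1 c2 => [|x e' IH] [|k1 c1] [|k2 c2] //=; rewrite ?add0r ?addr0 //.
by rewrite IH mulrzDr addrACA.
Qed.

Lemma evalv_scalev e' k c : evalv e' (scalev k c) = evalv e' c *~ k.
Proof.
elim: e' c => [|x e' IH] [|a c] /=; rewrite ?mul0rz //.
by rewrite IH mulrzDl mulrzA.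
Qed.

Lemma eval_coef t : eval t = evalv e (coef t).
Proof.
elim: t => [i||a Ha b Hb|a Ha|a Ha k|a Ha k] /=.
- elim: e i => [|x e' IH] [|i] //=; first by rewrite evalv_nil addr0.
  by rewrite mulr0z add0r IH.
- by rewrite evalv_nil.
- by rewrite evalv_addv Ha Hb.
- by rewrite evalv_scalev Ha mulrN1z.
- by rewrite evalv_scalev Ha -pmulrn.
- by rewrite evalv_scalev Ha.
Qed.

Definition holds (h : ineq) : Prop :=
  if strict h then eval (lhs h) < eval (rhs h) else eval (lhs h) <= eval (rhs h).

Definition valid (c : seq int * bool) : Prop :=
  if c.2 then 0 < evalv e c.1 else 0 <= evalv e c.1.

Lemma valid_gap h : valid (gap h) <-> holds h.
Proof.
rewrite /valid /holds /gap /= evalv_addv evalv_scalev mulrN1z -!eval_coef.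
by case: (strict h); rewrite (oag_subr_gt0 hG, oag_subr_ge0 hG).
Qed.

Lemma valid_addv c s h t : valid (c, s) -> valid (h, t) -> valid (addv c h, s || t).
Proof.
rewrite /valid /= evalv_addv; case: s; case: t => /= hc hh.
- by have := oag_ltr_leD hG hc (ltW hh); rewrite addr0.
- by have := oag_ltr_leD hG hc hh; rewrite addr0.
- by have := oag_ltr_leD hG hh hc; rewrite addr0 addrC.
- by have := oag_lerD hG hc hh; rewrite addr0.
Qed.

Lemma evalv_all0 e' c : all (eq_op^~ 0) c -> evalv e' c = 0.
Proof.
elim: e' c => [|x e' IH] [|k c] //= /andP[/eqP -> /IH ->].
by rewrite mulr0z addr0.
Qed.

Lemma closes_valid g c : closes g c -> valid c -> valid g.
Proof.
case: g c => [g s] [c t] /andP[/= /(evalv_all0 e) z st]; rewrite /valid /=.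
have -> : evalv e g = evalv e c.
  by apply/eqP; rewrite -subr_eq0 -mulrN1z -evalv_scalev -evalv_addv z.
by case: s st; case: t => //= _ /ltW.
Qed.

Lemma search_valid hs k c g : {in hs, forall h, valid h} -> valid c ->
  search hs k c g -> valid g.
Proof.
elim: hs k c => [|h hs IH] k c /= Hhs; first by move=> Hc S; apply: closes_valid S Hc.
have Hh : valid h by apply: Hhs; rewrite mem_head.
have {}Hhs : {in hs, forall h, valid h} by move=> h' h'hs; apply: Hhs; rewrite inE h'hs orbT.
elim: k c => [|k IHk] c Hc /orP[/(IH _ _ Hhs Hc) //|] //.
by apply: IHk; move: Hc Hh; case: c h => [c s] [h t]; apply: valid_addv.
Qed.

Definition gap0 : seq int * bool := ([::], false).

Lemma valid_gap0 : valid gap0.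
Proof. by rewrite /valid /= evalv_nil. Qed.

Fixpoint implies (hs : seq ineq) (g : ineq) : Prop :=
  if hs is h :: hs' then holds h -> implies hs' g else holds g.

Lemma implies_of_search k hs g : search (map gap hs) k gap0 (gap g) -> implies hs g.
Proof.
move=> S; have: {in map gap hs, forall h, valid h} -> holds g.
  by move=> Hhs; apply/valid_gap/(search_valid Hhs valid_gap0 S).
elim: hs {S} => [|h hs IH] /= H; first exact: H.
move=> Hh; apply: IH => Hhs; apply: H => c; rewrite inE => /predU1P[->|/Hhs //].
exact/valid_gap.
Qed.

End Soundness.
End LinearArith.

Ltac lin_add_atom env t :=
  lazymatch env with
  | nil => constr:(t :: nil)
  | (t :: _) => env
  | (?x :: ?r) => let r' := lin_add_atom r t in constr:(x :: r')
  end.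

Ltac lin_atom_index env t :=
  lazymatch env with
  | (t :: _) => constr:(0%nat)
  | (_ :: ?r) => let j := lin_atom_index r t in constr:(S j)
  end.

Ltac lin_atoms env t :=
  lazymatch t with
  | @GRing.add _ ?a ?b => let env' := lin_atoms env a in lin_atoms env' b
  | @GRing.opp _ ?a => lin_atoms env a
  | @GRing.zero _ => env
  | @GRing.natmul _ ?a _ => lin_atoms env a
  | @intmul _ ?a _ => lin_atoms env a
  | _ => lin_add_atom env t
  end.

Ltac lin_term env t :=
  lazymatch t with
  | @GRing.add _ ?a ?b =>
      let x := lin_term env a in let y := lin_term env b in constr:(LinearArith.Add x y)
  | @GRing.opp _ ?a => let x := lin_term env a in constr:(LinearArith.Opp x)
  | @GRing.zero _ => constr:(LinearArith.Zero)
  | @GRing.natmul _ ?a ?k => let x := lin_term env a in constr:(LinearArith.Muln x k)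
  | @intmul _ ?a ?k => let x := lin_term env a in constr:(LinearArith.Mulz x k)
  | _ => let i := lin_atom_index env t in constr:(LinearArith.Atom i)
  end.

Ltac lin_atoms_goal env g :=
  lazymatch g with
  | is_true (@Order.lt _ _ ?a ?b) -> ?g' =>
      let env1 := lin_atoms env a in let env2 := lin_atoms env1 b in
      lin_atoms_goal env2 g'
  | is_true (@Order.le _ _ ?a ?b) -> ?g' =>
      let env1 := lin_atoms env a in let env2 := lin_atoms env1 b in
      lin_atoms_goal env2 g'
  | is_true (@Order.lt _ _ ?a ?b) => let env1 := lin_atoms env a in lin_atoms env1 b
  | is_true (@Order.le _ _ ?a ?b) => let env1 := lin_atoms env a in lin_atoms env1 b
  end.

Ltac lin_ineq env g :=
  lazymatch g with
  | is_true (@Order.lt _ _ ?a ?b) =>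
      let x := lin_term env a in let y := lin_term env b in
      constr:(LinearArith.Ineq x y true)
  | is_true (@Order.le _ _ ?a ?b) =>
      let x := lin_term env a in let y := lin_term env b in
      constr:(LinearArith.Ineq x y false)
  end.

Ltac lin_hyps env g :=
  lazymatch g with
  | ?h -> ?g' =>
      let f := lin_ineq env h in let r := lin_hyps env g' in constr:(f :: r)
  | _ => constr:(@nil LinearArith.ineq)
  end.

Ltac lin_concl env g :=
  lazymatch g with
  | _ -> ?g' => lin_concl env g'
  | _ => lin_ineq env g
  end.

(* Closes a (strict or large) inequality in an ordered abelian group [G] that
   is a sum of at most six inequalities of the context (with repetitions). *)
Ltac oag_lia :=
  lazymatch goal with hG : ordered_abelian_group ?G |- _ =>
    repeat match goal with
    | H : is_true (@Order.le _ _ ?a _) |- _ => let _ := constr:(a : G) in revert H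
    | H : is_true (@Order.lt _ _ ?a _) |- _ => let _ := constr:(a : G) in revert H
    end;
    match goal with |- ?g =>
      let env := lin_atoms_goal (@nil G) g in
      let hs := lin_hyps env g in
      let c := lin_concl env g in
      change (LinearArith.implies env hs c);
      apply: (@LinearArith.implies_of_search _ hG env 6); vm_compute; reflexivity
    end
  end.

(** * Extended values and supertropical sums *)

Section Extended.
Variable G : porderZmodType.

(* [option G] is [G] extended by [None = -oo]: the codomain of [nuv]. *)
Definition oadd (x y : option G) : option G :=
  if x is Some a then if y is Some b then Some (a + b) else None else None.

Definition omax (x y : option G) : option G :=
  match x, y with
  | None, _ => y
  | _, None => x
  | Some a, Some b => Some (if a < b then b else a)
  end.

Definition ole (x y : option G) : bool :=
  match x, y with
  | None, _ => true
  | Some _, None => false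
  | Some a, Some b => a <= b
  end.

Definition olt (x y : option G) : bool :=
  match x, y with
  | _, None => false
  | None, Some _ => true
  | Some a, Some b => a < b
  end.

Definition per2 (a b c d : option G) : option G := omax (oadd a d) (oadd b c).

Hypothesis hG : ordered_abelian_group G.

Lemma ole_refl x : ole x x. Proof. by case: x => /=. Qed.

Lemma ole_trans y x z : ole x y -> ole y z -> ole x z.
Proof. by case: x y z => [x|] [y|] [z|] //=; apply: le_trans. Qed.

Lemma olt_le_trans y x z : olt x y -> ole y z -> olt x z.
Proof. by case: x y z => [x|] [y|] [z|] //=; apply: lt_le_trans. Qed.

Lemma ole_lt_trans y x z : ole x y -> olt y z -> olt x z.
Proof. by case: x y z => [x|] [y|] [z|] //=; apply: le_lt_trans. Qed.

Lemma oltxx x : olt x x = false.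
Proof. by case: x => //= x; rewrite ltxx. Qed.

Lemma olt_ngt x y : olt x y -> ~~ ole y x.
Proof. by case: x y => [x|] [y|] //=; rewrite lt_leAnge => /andP[]. Qed.

Lemma ole_ngt x y : ~~ olt x y -> ole y x.
Proof. by case: x y => [x|] [y|] //=; rewrite (oag_ltNge hG) negbK. Qed.

Lemma ole_anti x y : ole x y -> ole y x -> x = y.
Proof. by case: x y => [x|] [y|] //= xy yx; rewrite (@le_anti _ _ x y) ?xy. Qed.

Lemma ole_omaxl x y : ole x (omax x y).
Proof. by case: x y => [x|] [y|] //=; case: ifP => [/ltW|]. Qed.

Lemma ole_omaxr x y : ole y (omax x y).
Proof.
case: x y => [x|] [y|] //=; try exact: le_refl.
by case: ifP => // /negbT; rewrite (oag_ltNge hG) negbK.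
Qed.

Lemma omax_le x y z : ole x z -> ole y z -> ole (omax x y) z.
Proof. by case: x y z => [x|] [y|] [z|] //=; case: ifP. Qed.

Lemma omax_lt x y z : olt x z -> olt y z -> olt (omax x y) z.
Proof. by case: x y z => [x|] [y|] [z|] //=; case: ifP. Qed.

Lemma omaxC x y : omax x y = omax y x.
Proof. by apply: ole_anti; apply: omax_le; rewrite ?ole_omaxl ?ole_omaxr. Qed.

Lemma oadd_Some a b : oadd (Some a) (Some b) = Some (a + b).
Proof. by []. Qed.

Lemma ole_Some_finite a x : ole (Some a) x -> x != None.
Proof. by case: x. Qed.

Lemma olt_oadd_finite x y z : olt z (oadd x y) -> (x != None) && (y != None).
Proof. by case: x y z => [x|] [y|] []. Qed.

Lemma oaddC x y : oadd x y = oadd y x.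
Proof. by case: x y => [x|] [y|] //=; rewrite addrC. Qed.

Lemma oadd_le x y z w : ole x y -> ole z w -> ole (oadd x z) (oadd y w).
Proof. by case: x y z w => [x|] [y|] [z|] [w|] //=; apply: oag_lerD. Qed.

Lemma oadd_omaxl x y z : oadd (omax x y) z = omax (oadd x z) (oadd y z).
Proof. by case: x y z => [x|] [y|] [z|] //=; rewrite (oag_ltrD2r hG); case: ifP. Qed.

Lemma oadd_omaxr x y z : oadd z (omax x y) = omax (oadd z x) (oadd z y).
Proof. by rewrite oaddC oadd_omaxl ![oadd _ z]oaddC. Qed.

Lemma per2_le a b c d a' b' c' d' : ole a a' -> ole b b' -> ole c c' -> ole d d' ->
  ole (per2 a b c d) (per2 a' b' c' d').
Proof.
move=> ha hb hc hd; apply: omax_le.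
  exact: ole_trans (oadd_le ha hd) (ole_omaxl _ _).
exact: ole_trans (oadd_le hb hc) (ole_omaxr _ _).
Qed.

Lemma per2_swap_rows a b c d : per2 c d a b = per2 a b c d.
Proof. by rewrite /per2 omaxC [oadd c b]oaddC [oadd d a]oaddC. Qed.

Lemma per2_swap_cols a b c d : per2 b a d c = per2 a b c d.
Proof. by rewrite /per2 omaxC. Qed.

End Extended.

Section SmulLaw.
Variable G : porderZmodType.

Lemma smulA : associative (@smul G).
Proof. by case=> [|x|x] [|y|y] [|z|z] //=; rewrite addrA. Qed.

Lemma smulC : commutative (@smul G).
Proof. by case=> [|x|x] [|y|y] //=; rewrite addrC. Qed.

Lemma smul1m : left_id (@sone G) (@smul G).
Proof. by case=> [|x|x] //=; rewrite add0r. Qed.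

End SmulLaw.

HB.instance Definition _ (G : porderZmodType) :=
  Monoid.isComLaw.Build (stf G) (@sone G) (@smul G) (@smulA G) (@smulC G) (@smul1m G).

Section SupertropicalSums.
Variable G : porderZmodType.
Hypothesis hG : ordered_abelian_group G.
Implicit Types a b : stf G.

Lemma nuv_sadd a b : nuv (sadd a b) = omax (nuv a) (nuv b).
Proof. by case: a b => [|x|x] [|y|y]; rewrite /sadd //=; do !case: ifP. Qed.

Lemma nuv_smul a b : nuv (smul a b) = oadd (nuv a) (nuv b).
Proof. by case: a b => [|x|x] [|y|y]. Qed.

Lemma nuv_hat a : nuv (hat a) = nuv a. Proof. by case: a. Qed.

Lemma tangible_hat a : nuv a != None -> tangible (hat a).
Proof. by case: a. Qed.

Lemma nu_ltE a b : nu_lt a b = olt (nuv a) (nuv b).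
Proof. by case: a b => [|x|x] [|y|y]. Qed.

Lemma sadd_tangible a b : tangible (sadd a b) ->
  tangible a && olt (nuv b) (nuv a) || tangible b && olt (nuv a) (nuv b).
Proof.
by case: a b => [|x|x] [|y|y]; rewrite /sadd //=; case: ifP => [xy|_] /=;
  rewrite ?xy ?orbT //; case: ifP.
Qed.

Lemma tangible_saddl a b : tangible a -> olt (nuv b) (nuv a) ->
  tangible (sadd a b) /\ nuv (sadd a b) = nuv a.
Proof.
case: a b => [|x|x] [|y|y] //= _ yx; rewrite /sadd /= ?yx //.
all: by rewrite (oag_ltNge hG) (ltW yx).
Qed.

Lemma tangible_saddr a b : tangible b -> olt (nuv a) (nuv b) ->
  tangible (sadd a b) /\ nuv (sadd a b) = nuv b.
Proof. by case: a b => [|x|x] [|y|y] //= _ xy; rewrite /sadd /= xy. Qed.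

Variables (I : eqType) (P : pred I) (F : I -> stf G).
Local Notation ssum r := (\big[@sadd G/@SZero G]_(j <- r | P j) F j).

Lemma le_big_sadd r i : i \in r -> P i -> ole (nuv (F i)) (nuv (ssum r)).
Proof.
elim: r => [|x r IH] //; rewrite inE big_cons => /orP[/eqP <-|ir] Pi.
  by rewrite Pi nuv_sadd ole_omaxl.
case: ifP => _; last exact: IH.
by rewrite nuv_sadd; apply: ole_trans (IH ir Pi) (ole_omaxr hG _ _).
Qed.

Lemma big_sadd_le r u : (forall j, j \in r -> P j -> ole (nuv (F j)) u) ->
  ole (nuv (ssum r)) u.
Proof.
elim: r => [|x r IH] H; first by rewrite big_nil.
rewrite big_cons; have IH' := IH (fun j jr => H j (@mem_behead _ (x :: r) j jr)).
by case: ifP => Px //; rewrite nuv_sadd omax_le // H ?mem_head.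
Qed.

Lemma big_sadd_lt r u : u != None -> (forall j, j \in r -> P j -> olt (nuv (F j)) u) ->
  olt (nuv (ssum r)) u.
Proof.
move=> un; elim: r => [|x r IH] H; first by rewrite big_nil; case: u un H.
rewrite big_cons; have IH' := IH (fun j jr => H j (@mem_behead _ (x :: r) j jr)).
by case: ifP => Px //; rewrite nuv_sadd omax_lt // H ?mem_head.
Qed.

Lemma tangible_big_sadd_max r i : uniq r -> tangible (ssum r) ->
  i \in r -> P i -> nuv (F i) = nuv (ssum r) ->
  forall j, j \in r -> P j -> j != i -> olt (nuv (F j)) (nuv (ssum r)).
Proof.
elim: r => [|x r IH] //; rewrite cons_uniq big_cons => /andP[xr ur] T.
rewrite !inE => /orP[/eqP Ei|ir] Pi E j /orP[/eqP Ej|jr] Pj ji; subst.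
- by rewrite eqxx in ji.
- move: T E; rewrite Pi => /sadd_tangible/orP[]/andP[T lt].
    by rewrite (tangible_saddl T lt).2 => _; apply: ole_lt_trans (le_big_sadd jr Pj) lt.
  by rewrite (tangible_saddr T lt).2 => E; move: lt; rewrite E oltxx.
- move: T E; rewrite Pj => /sadd_tangible/orP[]/andP[T lt] E.
    by have := olt_ngt lt; rewrite -(tangible_saddl T lt).2 -E (le_big_sadd ir Pi).
  by rewrite (tangible_saddr T lt).2.
- move: T E; case: ifP => Px //.
    move=> /sadd_tangible/orP[]/andP[T lt] E.
    by have := olt_ngt lt; rewrite -(tangible_saddl T lt).2 -E (le_big_sadd ir Pi).
  rewrite (tangible_saddr T lt).2 in E *; exact: IH ur T ir Pi E j jr Pj ji.
  by move=> T E; apply: IH ur T ir Pi E j jr Pj ji.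
Qed.

Lemma tangible_big_sadd_of_max r i : uniq r -> i \in r -> P i -> tangible (F i) ->
  (forall j, j \in r -> P j -> j != i -> olt (nuv (F j)) (nuv (F i))) ->
  tangible (ssum r) /\ nuv (ssum r) = nuv (F i).
Proof.
elim: r => [|x r IH] //; rewrite cons_uniq big_cons inE => /andP[xr ur] /orP[/eqP Ei|ir] Pi Ti H.
  subst; rewrite Pi; apply: tangible_saddl => //; apply: big_sadd_lt; first by case: (F x) Ti.
  by move=> j jr Pj; apply: H; rewrite ?inE ?jr ?orbT //; apply: contraNneq xr => <-.
have [T E] := IH ur ir Pi Ti (fun j jr => H j (@mem_behead _ (x :: r) j jr)).
case: ifP => Px; last by [].
have xi : x != i by apply: contraNneq xr => ->.
by rewrite -E in H *; apply: tangible_saddr T (H x (mem_head _ _) Px xi).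
Qed.

End SupertropicalSums.

(** * Principal minors and the characteristic polynomial *)

Section PrincipalMinors.
Variable G : porderZmodType.
Hypothesis hG : ordered_abelian_group G.
Variables (n : nat) (A : 'M[stf G]_n).

Lemma pterm_le_pdet (S : {set 'I_n}) (s : 'S_n) : perm_on S s ->
  ole (nuv (st_pterm A S s)) (nuv (st_pdet A S)).
Proof. exact: (le_big_sadd hG) (mem_index_enum _). Qed.

Lemma pdet_le_alpha (S : {set 'I_n}) : ole (nuv (st_pdet A S)) (nuv (st_alpha A #|S|)).
Proof. exact: (le_big_sadd hG) (mem_index_enum _) _. Qed.

Lemma pterm_le_alpha (S : {set 'I_n}) (s : 'S_n) : perm_on S s ->
  ole (nuv (st_pterm A S s)) (nuv (st_alpha A #|S|)).
Proof. by move=> Ss; apply: ole_trans (pterm_le_pdet Ss) (pdet_le_alpha S). Qed.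

Lemma nuv_alpha0 : nuv (st_alpha A 0) = Some 0.
Proof.
apply: ole_anti; last first.
  by have := pterm_le_alpha (perm_on1 set0); rewrite cards0 /st_pterm big_set0.
apply: big_sadd_le => S _ /eqP/cards0_eq ->.
by apply: big_sadd_le => s _ _; rewrite /st_pterm big_set0 /=.
Qed.

Lemma Ind_dominant k x : x \in st_Ind A k ->
  #|st_Ind A k| = k /\
  exists2 s, perm_on (st_Ind A k) s & nuv (st_pterm A (st_Ind A k) s) = nuv (st_alpha A k).
Proof.
rewrite /st_Ind; case: pickP => [S /andP[/eqP cS /existsP[s /andP[Ss /eqP E]]]|_] /=.
  by split => //; exists s.
by rewrite inE.
Qed.

Lemma pterm_lt_alpha k (S S' : {set 'I_n}) (s s' : 'S_n) : tangible (st_alpha A k) ->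
  #|S| = k -> perm_on S s -> nuv (st_pterm A S s) = nuv (st_alpha A k) ->
  #|S'| = k -> S' != S -> perm_on S' s' ->
  olt (nuv (st_pterm A S' s')) (nuv (st_alpha A k)).
Proof.
move=> Tk cS Ss E cS' S'S S's'.
have ES : nuv (st_pdet A S) = nuv (st_alpha A k).
  by apply: ole_anti; [rewrite -cS pdet_le_alpha | rewrite -E pterm_le_pdet].
apply: ole_lt_trans (pterm_le_pdet S's') _.
apply: (tangible_big_sadd_max hG (index_enum_uniq _) Tk (mem_index_enum S));
  by rewrite ?mem_index_enum ?cS ?cS'.
Qed.

Lemma perm_onT (s : 'S_n) : perm_on [set: 'I_n] s.
Proof. exact/subsetP. Qed.

Lemma perm_on1_fixed (a : 'I_n) (s : 'S_n) : perm_on [set a] s -> s a = a.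
Proof. by move=> Ps; apply/eqP; rewrite -in_set1 (perm_closed a Ps) set11. Qed.

Lemma pterm1 (a : 'I_n) (s : 'S_n) : st_pterm A [set a] s = A a (s a).
Proof. by rewrite /st_pterm big_set1. Qed.

Lemma pterm2 (a b : 'I_n) (s : 'S_n) : a != b ->
  st_pterm A [set a; b] s = smul (A a (s a)) (A b (s b)).
Proof. by move=> ab; rewrite /st_pterm big_setU1 ?inE //= big_set1. Qed.

Lemma Ind1_eq t : t \in st_Ind A 1 ->
  st_Ind A 1 = [set t] /\ nuv (A t t) = nuv (st_alpha A 1).
Proof.
move=> tI; have [/eqP/cards1P[a Ea] [s Ps E]] := Ind_dominant tI.
move: tI Ps E; rewrite Ea inE => /eqP -> Ps; split=> //.
by rewrite -E pterm1 perm_on1_fixed.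
Qed.

Lemma pterm_setD1 (S : {set 'I_n}) (a : 'I_n) (s : 'S_n) : a \in S ->
  st_pterm A S s = smul (A a (s a)) (st_pterm A (S :\ a) s).
Proof. by move=> aS; rewrite /st_pterm (big_setD1 a aS). Qed.

Lemma perm_on2_cases (a b : 'I_n) (s : 'S_n) : a != b -> perm_on [set a; b] s ->
  s a = a /\ s b = b \/ s a = b /\ s b = a.
Proof.
move=> ab Ps; have := perm_closed a Ps; have := perm_closed b Ps.
rewrite !inE !eqxx orbT /= => /orP[]/eqP sb /orP[]/eqP sa; try by [left | right].
  by move: ab; rewrite -(inj_eq (@perm_inj _ s)) sa sb eqxx.
by move: ab; rewrite -(inj_eq (@perm_inj _ s)) sa sb eqxx.
Qed.

End PrincipalMinors.

Lemma strict_incr_id (n : nat) (f : nat -> nat) : f 0%N = 0%N ->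
  (forall k, (0 < k <= n)%N -> (f k.-1 < f k)%N) -> (f n <= n)%N ->
  forall k, (k <= n)%N -> f k = k.
Proof.
move=> f0 incr fn k kn.
have grow m j : (m + j <= n)%N -> (f m + j <= f (m + j))%N.
  elim: j => [|j IH] mjn; first by rewrite !addn0.
  have : (f (m + j) < f (m + j).+1)%N by apply: (incr (m + j).+1); lia.
  by rewrite addnS in mjn *; move: (IH (ltnW mjn)); lia.
by move: (grow 0%N k) (grow k (n - k)%N); rewrite f0 !add0n subnKC //; lia.
Qed.

Lemma corner_value (G : zmodType) (a b x : G) m : a + x *+ m.+1 = b + x *+ m -> b = a + x.
Proof. by rewrite mulrS addrA => /addIr. Qed.

Section CharacteristicPolynomial.
Variables (G : porderZmodType) (n : nat) (A : 'M[stf G]_n).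
Hypothesis hG : ordered_abelian_group G.

Lemma nuv_spow (x : G) m : nuv (spow (STan x) m) = Some (x *+ m).
Proof. by elim: m => //= m; case: (spow _ m) => //= y [->]; rewrite mulrS. Qed.

Lemma nuv_monom k x :
  nuv (st_monom A k (STan x)) = oadd (nuv (st_alpha A k)) (Some (x *+ (n - k))).
Proof. by rewrite /st_monom nuv_smul nuv_spow. Qed.

Variables (lam : nat -> G) (i : nat -> nat).
Hypotheses (halpha : forall k, (k <= n)%N -> tangible (st_alpha A k))
  (hi0 : i 0%N = 0%N)
  (hiess : forall k, (k <= n)%N -> (i k <= n)%N /\ st_essential A (i k))
  (hinc : forall k, (1 <= k <= n)%N -> (i k.-1 < i k)%N)
  (hcorner : forall k, (1 <= k <= n)%N ->
     nu_eq (st_monom A (i k.-1) (STan (lam k))) (st_monom A (i k) (STan (lam k)))).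

Lemma essential_index k : (k <= n)%N -> i k = k.
Proof. exact: strict_incr_id hi0 hinc (hiess (leqnn n)).1 k. Qed.

Lemma alpha_corner k : (1 <= k <= n)%N ->
  nuv (st_alpha A k) = oadd (nuv (st_alpha A k.-1)) (Some (lam k)).
Proof.
case: k => // k kn; have := hcorner kn; have {kn}[_ kn] := andP kn.
rewrite /nu_eq !nuv_monom /= !essential_index ?(ltnW kn) // -(subnSK kn).
have := halpha kn; have := halpha (ltnW kn).
case: (st_alpha A k) (st_alpha A k.+1) => [|a|a] // [|b|b] //= _ _.
by move=> /eqP[/corner_value ->].
Qed.

(* The point where the [k]-th monomial is essential lies strictly between
   [lam k.+1] and [lam k]. *)
Lemma lam_decreasing k : (0 < k < n)%N -> lam k.+1 < lam k.
Proof.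
case: k => // k /andP[_ kn]; have kn' := ltnW kn.
have [y ess] := (hiess kn').2; rewrite essential_index // in ess.
have := ess k (ltnW kn') (negbT (ltn_eqF (ltnSn k))).
have := ess k.+2 kn (negbT (gtn_eqF (ltnSn _))).
rewrite !nu_ltE !nuv_monom (alpha_corner (k := k.+2)) ?(alpha_corner (k := k.+1)) //=.
rewrite -(subnSK kn') -(subnSK kn); move: (n - k.+2)%N => m.
have := halpha (ltnW kn'); case: (nuv (st_alpha A k)) => // a _.
rewrite /= !mulrS; move: (y *+ m) => z; oag_lia.
Qed.

Lemma essential_Ind (t : nat -> 'I_n) :
  (forall k, (1 <= k <= n)%N -> t k \in st_Ind A (i k) :\: st_Ind A (i k.-1)) ->
  forall k, (1 <= k <= n)%N -> t k \in st_Ind A k :\: st_Ind A k.-1.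
Proof.
move=> ht k kn; have /andP[_ k_n] := kn; have := ht k kn.
by rewrite (essential_index k_n) (essential_index (leq_trans (leq_pred k) k_n)).
Qed.

End CharacteristicPolynomial.

(** * The eigenvector matrix *)

Section SmallDeterminants.
Variable G : porderZmodType.
Hypothesis hG : ordered_abelian_group G.

Lemma le_sdet m (M : 'M[stf G]_m) (s : 'S_m) :
  ole (nuv (\big[@smul G/@sone G]_(i < m) M i (s i))) (nuv (sdet M)).
Proof.
exact: (le_big_sadd hG (fun s : 'S_m => \big[@smul G/@sone G]_(i < m) M i (s i)))
  (mem_index_enum s) isT.
Qed.

Lemma nuv_sdet1 (N : 'M[stf G]_1) : nuv (sdet N) = nuv (N ord0 ord0).
Proof.
have E (s : 'S_1) : \big[@smul G/@sone G]_(i < 1) N i (s i) = N ord0 ord0.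
  by rewrite big_ord1 [s _]ord1.
apply: ole_anti; first by apply: big_sadd_le => s _ _; rewrite E ole_refl.
by rewrite -(E 1%g) le_sdet.
Qed.

Lemma ord2_cases (z : 'I_2) : z = ord0 \/ z = ord_max.
Proof. by case: z => -[|[|]] // ?; [left | right]; apply: val_inj. Qed.

Lemma perm2_cases (s : 'S_2) : s = 1%g \/ s = tperm ord0 ord_max.
Proof.
have smax : s ord_max = s ord0 -> False by move/perm_inj/(congr1 val).
have [s0|s0] := ord2_cases (s ord0); [left | right]; apply/permP => z;
  rewrite ?perm1; case: (ord2_cases z) => ->; rewrite ?tpermL ?tpermR //;
  by case: (ord2_cases (s ord_max)) => // E; case: smax; rewrite E s0.
Qed.

Lemma nuv_sdet2 (N : 'M[stf G]_2) : nuv (sdet N) =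
  per2 (nuv (N ord0 ord0)) (nuv (N ord0 ord_max)) (nuv (N ord_max ord0)) (nuv (N ord_max ord_max)).
Proof.
have E (s : 'S_2) : nuv (\big[@smul G/@sone G]_(i < 2) N i (s i)) =
    oadd (nuv (N ord0 (s ord0))) (nuv (N ord_max (s ord_max))).
  by rewrite big_ord_recl big_ord1 nuv_smul (_ : lift ord0 ord0 = ord_max) //; apply: val_inj.
apply: ole_anti.
  apply: big_sadd_le => s _ _; rewrite E; case: (perm2_cases s) => ->.
    by rewrite !perm1 ole_omaxl.
  by rewrite tpermL tpermR (ole_omaxr hG).
apply: omax_le; first by move: (le_sdet N 1%g); rewrite E !perm1.
by move: (le_sdet N (tperm ord0 ord_max)); rewrite E tpermL tpermR.
Qed.

Lemma nuv_addscal n (M : 'M[stf G]_n) l a b :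
  nuv (st_addscal M l a b) = if a == b then omax (nuv (M a a)) (nuv l) else nuv (M a b).
Proof. by rewrite mxE; case: eqP => [->|]; rewrite ?nuv_sadd. Qed.

Lemma st_skip_lift m (t : 'I_m) (r : 'I_m.-1) : st_skip t r = lift t r.
Proof. by apply: val_inj; rewrite /st_skip val_insubd (ltn_ord (lift t r)). Qed.

Lemma lift2_other (h a : 'I_2) : a != h -> lift h ord0 = a.
Proof. by move: h a; do 2!case=> -[|[|?]] //= ?; move=> _; apply: val_inj. Qed.

Lemma lift3_others (h a b : 'I_3) : a != h -> b != h -> a != b ->
  lift h ord0 = a /\ lift h ord_max = b \/ lift h ord0 = b /\ lift h ord_max = a.
Proof.
by move: h a b; do 3!case=> -[|[|[|?]]] //= ?;
  do ?[left; split; exact: val_inj | right; split; exact: val_inj].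
Qed.

Lemma nuv_minor2 (M : 'M[stf G]_2) (r c r1 c1 : 'I_2) : r1 != r -> c1 != c ->
  nuv (sdet (st_minor M r c)) = nuv (M r1 c1).
Proof.
move=> r1r c1c.
by rewrite nuv_sdet1 /st_minor mxE !st_skip_lift (lift2_other r1r) (lift2_other c1c).
Qed.

Lemma nuv_minor3 (M : 'M[stf G]_3) (r c r1 r2 c1 c2 : 'I_3) :
  r1 != r -> r2 != r -> r1 != r2 -> c1 != c -> c2 != c -> c1 != c2 ->
  nuv (sdet (st_minor M r c)) =
  per2 (nuv (M r1 c1)) (nuv (M r1 c2)) (nuv (M r2 c1)) (nuv (M r2 c2)).
Proof.
move=> r1r r2r r12 c1c c2c c12; rewrite nuv_sdet2 /st_minor !mxE !st_skip_lift.
case: (lift3_others r1r r2r r12) => -[-> ->];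
case: (lift3_others c1c c2c c12) => -[-> ->] //.
- exact: per2_swap_cols.
- exact: per2_swap_rows.
- exact: etrans (per2_swap_cols hG _ _ _ _) (per2_swap_rows hG _ _ _ _).
Qed.

End SmallDeterminants.

Ltac case_finite :=
  repeat match goal with |- context [?v] =>
    is_var v; lazymatch type of v with option _ => let a := fresh in destruct v as [a|] end
  end; simpl in *; try done.

Ltac max_plus_lt :=
  lazymatch goal with hG : ordered_abelian_group _ |- _ =>
    rewrite /per2 !(oadd_omaxl hG, oadd_omaxr hG); repeat apply: omax_lt;
    case_finite; oag_lia
  end.

Section EigenmatrixDominance3.
Variables (G : porderZmodType) (l1 l2 l3 : G).
Variables x11 x12 x13 x21 x22 x23 x31 x32 x33 : option G.
Hypotheses (hG : ordered_abelian_group G) (hl21 : l2 < l1) (hl32 : l3 < l2)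
  (hx11 : x11 = Some l1)
  (h11_22 : ole (oadd x11 x22) (Some (l1 + l2)))
  (h12_21 : ole (oadd x12 x21) (Some (l1 + l2)))
  (h2_max : ole (Some (l1 + l2)) (per2 x11 x12 x21 x22))
  (h11_33 : olt (oadd x11 x33) (Some (l1 + l2)))
  (h13_31 : olt (oadd x13 x31) (Some (l1 + l2)))
  (h11_23_32 : ole (oadd x11 (oadd x23 x32)) (Some (l1 + l2 + l3)))
  (h12_23_31 : ole (oadd x12 (oadd x23 x31)) (Some (l1 + l2 + l3)))
  (h13_32_21 : ole (oadd x13 (oadd x32 x21)) (Some (l1 + l2 + l3))).

(* With [xpq] for [A (t p) (t q)] and [lk] for [lam k], [Vpq] is the [adj_entry]
   at [(p, q)], a 2 x 2 minor of [A + lq I]; the hypotheses are the cycle bounds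
   that [Ind_1], [Ind_2] and [alpha_3] provide. *)
Local Notation V11 := (per2 (omax x22 (Some l1)) x23 x32 (omax x33 (Some l1))).
Local Notation V22 := (per2 (omax x11 (Some l2)) x13 x31 (omax x33 (Some l2))).
Local Notation V33 := (per2 (omax x11 (Some l3)) x12 x21 (omax x22 (Some l3))).
Local Notation V12 := (per2 x12 x13 x32 (omax x33 (Some l2))).
Local Notation V21 := (per2 x21 x23 x31 (omax x33 (Some l1))).
Local Notation V13 := (per2 x13 x12 x23 (omax x22 (Some l3))).
Local Notation V31 := (per2 x31 x32 x21 (omax x22 (Some l1))).
Local Notation V23 := (per2 x23 x21 x13 (omax x11 (Some l3))).
Local Notation V32 := (per2 x32 x31 x12 (omax x11 (Some l2))).

Let x22_le : ole x22 (Some l2).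
Proof. by move: h11_22; rewrite hx11; case_finite; oag_lia. Qed.

Let x33_le : ole x33 (Some l2).
Proof. by move: h11_33; rewrite hx11; case_finite; oag_lia. Qed.

Let V11_ge : ole (Some (l1 + l1)) V11.
Proof.
apply: ole_trans _ (ole_omaxl _ _); rewrite -oadd_Some.
by apply: (oadd_le hG); apply: (ole_omaxr hG).
Qed.

Let V22_ge : ole (Some (l1 + l2)) V22.
Proof.
apply: ole_trans _ (ole_omaxl _ _); rewrite -oadd_Some.
by apply: (oadd_le hG); rewrite ?hx11 ?ole_omaxl ?(ole_omaxr hG).
Qed.

Let V33_ge : ole (Some (l1 + l2)) V33.
Proof. by apply: ole_trans h2_max _; apply: (per2_le hG); rewrite ?ole_refl ?ole_omaxl. Qed.

Let V12_le : ole V12 (per2 x12 x13 x32 (Some l2)).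
Proof.
apply: (per2_le hG); rewrite ?ole_refl //.
exact: omax_le x33_le (ole_refl _).
Qed.

Let V21_le : ole V21 (per2 x21 x23 x31 (Some l1)).
Proof.
apply: (per2_le hG); rewrite ?ole_refl //.
exact: omax_le (ole_trans x33_le (ltW hl21 : ole (Some l2) (Some l1))) (ole_refl _).
Qed.

Let V13_le : ole V13 (per2 x13 x12 x23 (Some l2)).
Proof.
apply: (per2_le hG); rewrite ?ole_refl //.
exact: omax_le x22_le (ltW hl32 : ole (Some l3) (Some l2)).
Qed.

Let V31_le : ole V31 (per2 x31 x32 x21 (Some l1)).
Proof.
apply: (per2_le hG); rewrite ?ole_refl //.
exact: omax_le (ole_trans x22_le (ltW hl21 : ole (Some l2) (Some l1))) (ole_refl _).
Qed.

Let V23_le : ole V23 (per2 x23 x21 x13 (Some l1)).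
Proof.
apply: (per2_le hG); rewrite ?ole_refl // hx11.
exact: omax_le (ole_refl _) (ltW (lt_trans hl32 hl21) : ole (Some l3) (Some l1)).
Qed.

Let V32_le : ole V32 (per2 x32 x31 x12 (Some l1)).
Proof.
apply: (per2_le hG); rewrite ?ole_refl // hx11.
exact: omax_le (ole_refl _) (ltW hl21 : ole (Some l2) (Some l1)).
Qed.

Lemma eigenmatrix3_dominant :
  [/\ olt (oadd V12 V21) (oadd V11 V22), olt (oadd V13 V31) (oadd V11 V33),
      olt (oadd V23 V32) (oadd V22 V33),
      olt (oadd V12 (oadd V23 V31)) (oadd V11 (oadd V22 V33)) &
      olt (oadd V13 (oadd V32 V21)) (oadd V11 (oadd V33 V22))].
Proof.
have hl31 := lt_trans hl32 hl21; have ge3 := oadd_le hG V11_ge (oadd_le hG V22_ge V33_ge).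
split.
- apply: olt_le_trans (oadd_le hG V11_ge V22_ge).
  apply: ole_lt_trans (oadd_le hG V12_le V21_le) _.
  by subst x11; max_plus_lt.
- apply: olt_le_trans (oadd_le hG V11_ge V33_ge).
  apply: ole_lt_trans (oadd_le hG V13_le V31_le) _.
  by subst x11; max_plus_lt.
- apply: olt_le_trans (oadd_le hG V22_ge V33_ge).
  apply: ole_lt_trans (oadd_le hG V23_le V32_le) _.
  by subst x11; max_plus_lt.
- apply: olt_le_trans ge3.
  apply: ole_lt_trans (oadd_le hG V12_le (oadd_le hG V23_le V31_le)) _.
  by subst x11; max_plus_lt.
- apply: olt_le_trans (oadd_le hG V11_ge (oadd_le hG V33_ge V22_ge)).
  apply: ole_lt_trans (oadd_le hG V13_le (oadd_le hG V32_le V21_le)) _.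
  by subst x11; max_plus_lt.
Qed.

End EigenmatrixDominance3.

Section Dependence.
Variable G : porderZmodType.
Hypothesis hG : ordered_abelian_group G.

Lemma ghost_big_sadd_rival (r : seq nat) (F : nat -> stf G) l : uniq r -> l \in r ->
  tangible (F l) -> ghost0 (\big[@sadd G/@SZero G]_(k <- r) F k) ->
  exists2 k, k \in r & (k != l) && ole (nuv (F l)) (nuv (F k)).
Proof.
move=> ur lr Tl /negP ghost; apply/hasP/negPn/negP => /hasPn none; apply: ghost.
apply: (proj1 (tangible_big_sadd_of_max hG ur lr isT Tl _)) => k kr _ kl.
by apply: contraR (none k kr) => /(ole_ngt hG) ->; rewrite kl.
Qed.

Lemma dependent_rival n m (v : nat -> 'cV[stf G]_n) (t : nat -> 'I_n) :
  st_dependent m v -> exists a : nat -> G, forall l, (1 <= l <= m)%N ->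
    tangible (v l (t l) 0) -> exists2 k, (1 <= k <= m)%N &
    (k != l) &&
    ole (oadd (Some (a l)) (nuv (v l (t l) 0))) (oadd (Some (a k)) (nuv (v k (t l) 0))).
Proof.
move=> [a dep]; exists a => l lm Tl.
have ur : uniq (index_iota 1 m.+1) by exact: iota_uniq.
have lr : l \in index_iota 1 m.+1 by rewrite mem_index_iota; lia.
have Tal : tangible (smul (STan (a l)) (v l (t l) 0)) by case: (v l (t l) 0) Tl.
have [k] := ghost_big_sadd_rival ur lr Tal (dep (t l)).
by rewrite mem_index_iota !nuv_smul => km ?; exists k => //; lia.
Qed.

(* The valuation of the [t p]-th entry of the [t q]-th column of
   [adj (A + lam q I)]. *)
Definition adj_entry n (A : 'M[stf G]_n) (lam : nat -> G) (t : nat -> 'I_n) (p q : nat) :=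
  nuv (sdet (st_minor (st_addscal A (STan (lam q))) (t q) (t p))).

Lemma adj_columns_rival n m (A : 'M[stf G]_n) (lam : nat -> G) (t : nat -> 'I_n) :
  st_dependent m (fun k => \col_r hat (sadj (st_addscal A (STan (lam k))) r (t k))) ->
  exists a : nat -> G, forall l, (1 <= l <= m)%N -> adj_entry A lam t l l != None ->
  exists2 k, (1 <= k <= m)%N & (k != l) &&
    ole (oadd (Some (a l)) (adj_entry A lam t l l)) (oadd (Some (a k)) (adj_entry A lam t l k)).
Proof.
have entry p q : (\col_r hat (sadj (st_addscal A (STan (lam q))) r (t q))) (t p) 0 =
    hat (sdet (st_minor (st_addscal A (STan (lam q))) (t q) (t p))) by rewrite !mxE.
move=> /(dependent_rival t) [a rival]; exists a => l lm Vl.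
have [|k km R] := rival l lm; first by rewrite entry; apply: tangible_hat.
by rewrite !entry !nuv_hat in R; exists k.
Qed.

(* Summing the rival inequalities along a cycle cancels the potentials [a]. *)
Lemma no_rival_cycle2 (a b : G) (u w p q : option G) : olt (oadd p q) (oadd u w) ->
  ole (oadd (Some a) u) (oadd (Some b) p) -> ole (oadd (Some b) w) (oadd (Some a) q) ->
  False.
Proof.
move=> /olt_ngt/negP N Ru Rw; apply: N; move: Ru Rw.
by case: u w p q => [u|] [w|] [p|] [q|] //=; oag_lia.
Qed.

Lemma no_rival_cycle3 (a b c : G) (u v w p q r : option G) :
  olt (oadd p (oadd q r)) (oadd u (oadd v w)) ->
  ole (oadd (Some a) u) (oadd (Some b) p) -> ole (oadd (Some b) v) (oadd (Some c) q) ->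
  ole (oadd (Some c) w) (oadd (Some a) r) -> False.
Proof.
move=> /olt_ngt/negP N Ru Rv Rw; apply: N; move: Ru Rv Rw.
by case: u v w p q r => [u|] [v|] [w|] [p|] [q|] [r|] //=; oag_lia.
Qed.

End Dependence.

Lemma setT3 (a b c : 'I_3) : a != b -> a != c -> b != c -> [set: 'I_3] = [set a; b; c].
Proof.
move=> ab ac bc; apply/eqP; rewrite eq_sym eqEcard subsetT cardsT card_ord.
by rewrite -setUA cardsU1 cards2 bc !inE negb_or ab ac.
Qed.

Lemma perm3_cycle (a b c : 'I_3) : a != b -> a != c -> b != c ->
  exists s : 'S_3, [/\ s a = b, s b = c & s c = a].
Proof.
move=> ab ac bc; exists (tperm a b * tperm a c)%g.
have cb : c != b by rewrite eq_sym.
by rewrite !permM tpermL tpermR (tpermD ac bc) (tpermD ab cb) tpermL tpermR.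
Qed.

Lemma pterm3 G (A : 'M[stf G]_3) (a b c : 'I_3) (s : 'S_3) : a != b -> a != c -> b != c ->
  st_pterm A [set: 'I_3] s = smul (A a (s a)) (smul (A b (s b)) (A c (s c))).
Proof.
move=> ab ac bc; rewrite /st_pterm (setT3 ab ac bc) -setUA big_setU1 /=; last first.
  by rewrite !inE negb_or ab ac.
by rewrite big_setU1 ?inE //= big_set1.
Qed.

Section Proposition3.
Variables (G : porderZmodType) (A : 'M[stf G]_3) (lam : nat -> G) (i : nat -> nat).
Variable t : nat -> 'I_3.
Hypotheses (hG : ordered_abelian_group G)
  (halpha : forall k, (k <= 3)%N -> tangible (st_alpha A k))
  (hi0 : i 0%N = 0%N)
  (hiess : forall k, (k <= 3)%N -> (i k <= 3)%N /\ st_essential A (i k))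
  (hinc : forall k, (1 <= k <= 3)%N -> (i k.-1 < i k)%N)
  (hcorner : forall k, (1 <= k <= 3)%N ->
     nu_eq (st_monom A (i k.-1) (STan (lam k))) (st_monom A (i k) (STan (lam k))))
  (ht : forall k, (1 <= k <= 3)%N -> t k \in st_Ind A (i k) :\: st_Ind A (i k.-1)).

Local Notation t1 := (t 1%N).
Local Notation t2 := (t 2%N).
Local Notation t3 := (t 3%N).
Local Notation l1 := (lam 1%N).
Local Notation l2 := (lam 2%N).
Local Notation l3 := (lam 3%N).
Local Notation x p q := (nuv (A (t p%N) (t q%N))).
Local Notation corner := (alpha_corner halpha hi0 hiess hinc hcorner).
Local Notation tInd := (essential_Ind hi0 hiess hinc ht).

Let alpha1 : nuv (st_alpha A 1%N) = Some l1.
Proof. by rewrite corner //= (nuv_alpha0 hG) /= add0r. Qed.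

Let alpha2 : nuv (st_alpha A 2%N) = Some (l1 + l2).
Proof. by rewrite corner //= alpha1. Qed.

Let alpha3 : nuv (st_alpha A 3%N) = Some (l1 + l2 + l3).
Proof. by rewrite corner //= alpha2. Qed.

Let lam21 : l2 < l1.
Proof. exact: (lam_decreasing hG halpha hi0 hiess hinc hcorner (k := 1%N)). Qed.

Let lam32 : l3 < l2.
Proof. exact: (lam_decreasing hG halpha hi0 hiess hinc hcorner (k := 2%N)). Qed.


Let Ind1_t1 : st_Ind A 1%N = [set t1] /\ x 1 1 = Some l1.
Proof. by rewrite -alpha1; apply: Ind1_eq; have := tInd (k := 1%N) isT; rewrite inE => /andP[]. Qed.

Let t12 : t1 != t2.
Proof. by have := tInd (k := 2%N) isT; rewrite !inE Ind1_t1.1 inE eq_sym => /andP[]. Qed.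

Let t2_Ind2 : t2 \in st_Ind A 2%N.
Proof. by have := tInd (k := 2%N) isT; rewrite inE => /andP[]. Qed.

(* Otherwise [A t1 t1] times the dominant term on [Ind_2] would reach
   [alpha_3], forcing [l1 <= l3]. *)
Let t1_Ind2 : t1 \in st_Ind A 2%N.
Proof.
have [cS2 [s2 Ps2 E2]] := Ind_dominant t2_Ind2.
apply/negPn/negP => t1S2; move: cS2 Ps2 E2 t1S2; set S2 := st_Ind A 2%N => cS2 Ps2 E2 t1S2.
have ES2 : [set: 'I_3] :\ t1 = S2.
  have cD : #|[set: 'I_3] :\ t1| = 2%N.
    by have := cardsD1 (t1) [set: 'I_3]; rewrite cardsT card_ord inE => -[].
  apply/eqP; rewrite eq_sym eqEcard cS2 cD leqnn andbT.
  by apply/subsetP => z zS; rewrite !inE andbT; apply: contraNneq t1S2 => <-.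
have := pterm_le_alpha hG A (perm_onT s2).
rewrite cardsT card_ord alpha3 (pterm_setD1 _ _ (in_setT (t1))) ES2 nuv_smul.
rewrite (out_perm Ps2 t1S2) Ind1_t1.2 E2 alpha2 /= => h.
suff : l3 < l3 by rewrite ltxx.
oag_lia.
Qed.

Let Ind2_eq : st_Ind A 2%N = [set t1; t2].
Proof.
have [cS2 _] := Ind_dominant t2_Ind2; apply/eqP; rewrite eq_sym eqEcard cards2 t12 cS2 leqnn.
by rewrite andbT; apply/subsetP => z; rewrite !inE => /orP[]/eqP->.
Qed.

Let t3_fresh : (t1 != t3) && (t2 != t3).
Proof.
have := tInd (k := 3%N) isT.
by rewrite !inE Ind2_eq !inE negb_or ![t3 == _]eq_sym => /andP[].
Qed.

Let t13 : t1 != t3. Proof. by case/andP: t3_fresh. Qed.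
Let t23 : t2 != t3. Proof. by case/andP: t3_fresh. Qed.

Let card12 : #|[set t1; t2]| = 2%N. Proof. by rewrite cards2 t12. Qed.

Let h11_22 : ole (oadd (x 1 1) (x 2 2)) (Some (l1 + l2)).
Proof.
have := pterm_le_alpha hG A (perm_on1 [set t1; t2]).
by rewrite card12 alpha2 pterm2 // !perm1 nuv_smul.
Qed.

Let h12_21 : ole (oadd (x 1 2) (x 2 1)) (Some (l1 + l2)).
Proof.
have := pterm_le_alpha hG A (tperm_on (t1) (t2)).
by rewrite card12 alpha2 pterm2 // tpermL tpermR nuv_smul.
Qed.

Let h2_max : ole (Some (l1 + l2)) (per2 (x 1 1) (x 1 2) (x 2 1) (x 2 2)).
Proof.
have [_ [s Ps]] := Ind_dominant t2_Ind2; rewrite Ind2_eq alpha2 in Ps * => <-.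
rewrite pterm2 // nuv_smul; case: (perm_on2_cases t12 Ps) => -[-> ->].
  exact: ole_omaxl.
exact: ole_omaxr.
Qed.

Let pair13_lt (s : 'S_3) : perm_on [set t1; t3] s ->
  olt (nuv (st_pterm A [set t1; t3] s)) (Some (l1 + l2)).
Proof.
move=> Ps; have [_ [s2 Ps2 E2]] := Ind_dominant t2_Ind2; rewrite -alpha2.
apply: (pterm_lt_alpha hG (halpha (isT : 2 <= 3)%N) _ Ps2 E2) Ps.
- by rewrite Ind2_eq card12.
- by rewrite cards2 t13.
apply/eqP => /setP/(_ (t3)); rewrite Ind2_eq !inE eqxx orbT.
by rewrite ![t3 == _]eq_sym (negbTE t13) (negbTE t23).
Qed.

Let h11_33 : olt (oadd (x 1 1) (x 3 3)) (Some (l1 + l2)).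
Proof. by have := pair13_lt (perm_on1 _); rewrite pterm2 // !perm1 nuv_smul. Qed.

Let h13_31 : olt (oadd (x 1 3) (x 3 1)) (Some (l1 + l2)).
Proof. by have := pair13_lt (tperm_on _ _); rewrite pterm2 // tpermL tpermR nuv_smul. Qed.

Let term3_le (a b c : 'I_3) (s : 'S_3) : a != b -> a != c -> b != c ->
  ole (oadd (nuv (A a (s a))) (oadd (nuv (A b (s b))) (nuv (A c (s c)))))
      (Some (l1 + l2 + l3)).
Proof.
move=> ab ac bc; have := pterm_le_alpha hG A (perm_onT s).
by rewrite cardsT card_ord alpha3 (pterm3 _ _ ab ac bc) !nuv_smul.
Qed.

Let h11_23_32 : ole (oadd (x 1 1) (oadd (x 2 3) (x 3 2))) (Some (l1 + l2 + l3)).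
Proof.
have := term3_le (tperm (t2) (t3)) t12 t13 t23.
by rewrite tpermL tpermR tpermD // eq_sym.
Qed.

Let h12_23_31 : ole (oadd (x 1 2) (oadd (x 2 3) (x 3 1))) (Some (l1 + l2 + l3)).
Proof.
have [s [s1 s2 s3]] := perm3_cycle t12 t13 t23.
by have := term3_le s t12 t13 t23; rewrite s1 s2 s3.
Qed.

Let h13_32_21 : ole (oadd (x 1 3) (oadd (x 3 2) (x 2 1))) (Some (l1 + l2 + l3)).
Proof.
have t32 : t3 != t2 by rewrite eq_sym.
have [s [s1 s3 s2]] := perm3_cycle t13 t12 t32.
by have := term3_le s t13 t12 t32; rewrite s1 s2 s3.
Qed.

Local Notation V p q := (adj_entry A lam t p%N q%N).

Let adj_entry_offdiag p q r : t p != t q -> t p != t r -> t q != t r ->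
  V p q = per2 (x p q) (x p r) (x r q) (omax (x r r) (Some (lam q))).
Proof.
move=> pq pr qr; have qp : t q != t p by rewrite eq_sym.
have rp : t r != t p by rewrite eq_sym.
have rq : t r != t q by rewrite eq_sym.
by rewrite /adj_entry (nuv_minor3 hG _ pq rq pr qp rp qr) !nuv_addscal eqxx !ifN.
Qed.

Let adj_entry_diag q p r : t p != t q -> t r != t q -> t p != t r ->
  V q q = per2 (omax (x p p) (Some (lam q))) (x p r) (x r p) (omax (x r r) (Some (lam q))).
Proof.
move=> pq rq pr; have rp : t r != t p by rewrite eq_sym.
by rewrite /adj_entry (nuv_minor3 hG _ pq rq pr pq rq pr) !nuv_addscal !eqxx !ifN.
Qed.

Let adj_entry_dominant :
  [/\ olt (oadd (V 1 2) (V 2 1)) (oadd (V 1 1) (V 2 2)),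
      olt (oadd (V 1 3) (V 3 1)) (oadd (V 1 1) (V 3 3)),
      olt (oadd (V 2 3) (V 3 2)) (oadd (V 2 2) (V 3 3)),
      olt (oadd (V 1 2) (oadd (V 2 3) (V 3 1))) (oadd (V 1 1) (oadd (V 2 2) (V 3 3))) &
      olt (oadd (V 1 3) (oadd (V 3 2) (V 2 1))) (oadd (V 1 1) (oadd (V 3 3) (V 2 2)))].
Proof.
have t21 : t2 != t1 by rewrite eq_sym.
have t31 : t3 != t1 by rewrite eq_sym.
have t32 : t3 != t2 by rewrite eq_sym.
rewrite (adj_entry_offdiag t12 t13 t23) (adj_entry_offdiag t21 t23 t13).
rewrite (adj_entry_offdiag t13 t12 t32) (adj_entry_offdiag t31 t32 t12).
rewrite (adj_entry_offdiag t23 t21 t31) (adj_entry_offdiag t32 t31 t21).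
rewrite (adj_entry_diag t21 t31 t23) (adj_entry_diag t12 t32 t13) (adj_entry_diag t13 t23 t12).
exact: eigenmatrix3_dominant hG lam21 lam32 Ind1_t1.2 h11_22 h12_21 h2_max h11_33 h13_31
  h11_23_32 h12_23_31 h13_32_21.
Qed.

Lemma eigenvectors3_independent :
  st_independent 3%N (fun k => \col_r hat (sadj (st_addscal A (STan (lam k))) r (t k))).
Proof.
move=> /(adj_columns_rival hG) [a rival].
have [d12 d13 d23 d123 d132] := adj_entry_dominant.
have /andP[V11 V22] := olt_oadd_finite d12; have /andP[_ V33] := olt_oadd_finite d13.
have [k1 + /andP[+ R1]] := rival 1%N isT V11.
have [k2 + /andP[+ R2]] := rival 2%N isT V22.
have [k3 + /andP[+ R3]] := rival 3%N isT V33.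
case: k3 R3 => [|[|[|[|?]]]] // R3 _ _;
case: k2 R2 => [|[|[|[|?]]]] // R2 _ _;
case: k1 R1 => [|[|[|[|?]]]] // R1 _ _.
all: first [ exact: no_rival_cycle2 d12 R1 R2 | exact: no_rival_cycle2 d13 R1 R3
           | exact: no_rival_cycle2 d23 R2 R3 | exact: no_rival_cycle3 d123 R1 R2 R3
           | exact: no_rival_cycle3 d132 R1 R3 R2 ].
Qed.

End Proposition3.

Section Proposition2.
Variables (G : porderZmodType) (A : 'M[stf G]_2) (lam : nat -> G) (i : nat -> nat).
Variable t : nat -> 'I_2.
Hypotheses (hG : ordered_abelian_group G)
  (halpha : forall k, (k <= 2)%N -> tangible (st_alpha A k))
  (hi0 : i 0%N = 0%N)
  (hiess : forall k, (k <= 2)%N -> (i k <= 2)%N /\ st_essential A (i k))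
  (hinc : forall k, (1 <= k <= 2)%N -> (i k.-1 < i k)%N)
  (hcorner : forall k, (1 <= k <= 2)%N ->
     nu_eq (st_monom A (i k.-1) (STan (lam k))) (st_monom A (i k) (STan (lam k))))
  (ht : forall k, (1 <= k <= 2)%N -> t k \in st_Ind A (i k) :\: st_Ind A (i k.-1)).

Local Notation t1 := (t 1%N).
Local Notation t2 := (t 2%N).
Local Notation l1 := (lam 1%N).
Local Notation l2 := (lam 2%N).
Local Notation x p q := (nuv (A (t p%N) (t q%N))).
Local Notation V p q := (adj_entry A lam t p%N q%N).
Local Notation corner := (alpha_corner halpha hi0 hiess hinc hcorner).
Local Notation tInd := (essential_Ind hi0 hiess hinc ht).

Let alpha1 : nuv (st_alpha A 1%N) = Some l1.
Proof. by rewrite corner //= (nuv_alpha0 hG) /= add0r. Qed.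

Let alpha2 : nuv (st_alpha A 2%N) = Some (l1 + l2).
Proof. by rewrite corner //= alpha1. Qed.

Let lam21 : l2 < l1.
Proof. exact: (lam_decreasing hG halpha hi0 hiess hinc hcorner (k := 1%N)). Qed.


Let Ind1_t1 : st_Ind A 1%N = [set t1] /\ x 1 1 = Some l1.
Proof. by rewrite -alpha1; apply: Ind1_eq; have := tInd (k := 1%N) isT; rewrite inE => /andP[]. Qed.

Let t21 : t2 != t1.
Proof. by have := tInd (k := 2%N) isT; rewrite !inE Ind1_t1.1 inE => /andP[]. Qed.

Let t12 : t1 != t2. Proof. by rewrite eq_sym. Qed.

Lemma eigenvectors2_independent :
  st_independent 2%N (fun k => \col_r hat (sadj (st_addscal A (STan (lam k))) r (t k))).
Proof.
have V11 : ole (Some l1) (V 1 1).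
  by rewrite /adj_entry (nuv_minor2 hG _ t21 t21) nuv_addscal eqxx (ole_omaxr hG).
have V22 : ole (Some l1) (V 2 2).
  by rewrite /adj_entry (nuv_minor2 hG _ t12 t12) nuv_addscal eqxx -Ind1_t1.2 ole_omaxl.
have d12 : olt (oadd (V 1 2) (V 2 1)) (oadd (V 1 1) (V 2 2)).
  rewrite /adj_entry (nuv_minor2 hG _ t12 t21) (nuv_minor2 hG _ t21 t12) !nuv_addscal !ifN //.
  apply: ole_lt_trans (_ : ole _ (Some (l1 + l2))) (olt_le_trans _ (oadd_le hG V11 V22)).
    have := pterm_le_alpha hG A (tperm_on t1 t2).
    by rewrite cards2 t12 alpha2 pterm2 // tpermL tpermR nuv_smul.
  by rewrite /= (oag_ltrD2l hG).
move=> /(adj_columns_rival hG) [a rival].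
have [k1 k1r /andP[k1n R1]] := rival 1%N isT (ole_Some_finite V11).
have [k2 k2r /andP[k2n R2]] := rival 2%N isT (ole_Some_finite V22).
have k12 : (k1 = 2 /\ k2 = 1)%N by lia.
by case: k12 => ??; subst; apply: no_rival_cycle2 d12 R1 R2.
Qed.

End Proposition2.

Local Close Scope ring_scope.

Theorem proposition3p2
  (G : porderZmodType) (hG : ordered_abelian_group G)
  (n : nat) (hn : n = 2 \/ n = 3)
  (A : 'M[stf G]_n)
  (* A is supertropically nonsingular *)
  (hdet : tangible (sdet A))
  (* all coefficients of f_A are tangible *)
  (halpha : forall k, (k <= n)%N -> tangible (st_alpha A k))
  (* the n distinct eigenvalues lambda_1, ..., lambda_n *)
  (lam : nat -> G)
  (heig : forall k, (1 <= k <= n)%N -> st_eigenvalue A (lam k))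
  (hdist : forall k l, (1 <= k <= n)%N -> (1 <= l <= n)%N ->
                       lam k = lam l -> k = l)
  (* i_0 = 0 < i_1 < ... < i_n: indices of the st_essential monomials, with
     alpha_{i_(k-1)} x^(n - i_(k-1)) and alpha_{i_k} x^(n - i_k) subsequent
     st_essential monomials, and lambda_k the corner root between them *)
  (i : nat -> nat)
  (hi0 : i 0%N = 0%N)
  (hiess : forall k, (k <= n)%N -> (i k <= n)%N /\ st_essential A (i k))
  (hisub : forall k, (1 <= k <= n)%N ->
     (i k.-1 < i k)%N /\
     (forall j, (i k.-1 < j < i k)%N -> ~ st_essential A j))
  (hcorner : forall k, (1 <= k <= n)%N ->
     nu_eq (st_monom A (i k.-1) (STan (lam k))) (st_monom A (i k) (STan (lam k))))
  (* t_k in I_{lambda_k} = Ind_{i_k} \ Ind_{i_(k-1)} *)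
  (t : nat -> 'I_n)
  (ht : forall k, (1 <= k <= n)%N -> t k \in st_Ind A (i k) :\: st_Ind A (i k.-1)) :
  (* v_k = tangible value of the t_k-th column of adj(A + lambda_k I) *)
  let v : nat -> 'cV[stf G]_n := fun k =>
    (\col_r hat (sadj (st_addscal A (STan (lam k))) r (t k)))%R in
  st_independent n v.
Proof.
have hinc k : (1 <= k <= n)%N -> (i k.-1 < i k)%N by move=> /hisub[].
case: hn => En; subst n.
- exact: eigenvectors2_independent hG halpha hi0 hiess hinc hcorner ht.
- exact: eigenvectors3_independent hG halpha hi0 hiess hinc hcorner ht.
Qed.
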